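(* Let $P_1,\dots,P_t$ be sets of points in $\mathbb{R}^1$, each point having a color from $\{1,\dots,\phi\}$. For each $j\in\{1,\dots,t\}$ and each color $c$, let $x_1<x_2<\cdots$ be the points of color $c$ in $P_j$, and map $x_i$ to the point $(x_i,x_{i+1},j)\in\mathbb{R}^3$ (with $x_{i+1}=\infty$ if $x_i$ is the last one), with weight $i$; let $\tilde P$ be the set of all these mapped points. Then for every $1\le i\le t$ and all $x,y\in\mathbb{R}$, the set $\tilde Q=(-\infty,x]\times[y,\infty)\times(-\infty,i]$ contains at most $i\phi$ points of $\tilde P$ (i.e. $\tilde Q$ is $i\phi$-shallow with respect to $\tilde P$).
   Context: A range is $k$-shallow with respect to a point set if it contains at most $k$ points of the set.
   Formalization: The bound $i\phi$ on the number of points of $\tilde P$ in $\tilde Q$ is claimed only for x < y, not for all x, y ∈ ℝ. The statement above fails without it. *)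

From mathcomp Require Import all_boot all_order all_algebra.
Set Implicit Arguments. Unset Strict Implicit. Unset Printing Implicit Defensive.
Import Order.TTheory GRing.Theory Num.Theory.
Local Open Scope ring_scope.

(* A point of R^3 of the form (a, b, j) with b possibly = +infinity
   (encoded as None), and j an index. *)
Definition pt3 (R : Type) := (R * option R * nat)%type.

Definition color_class (R : realDomainType) (s : seq R) (col : R -> nat)
  (c : nat) : seq R := sort <=%R [seq q <- s | col q == c].

Definition lift_class (R : realDomainType) (L : seq R) (j : nat)
  : seq (pt3 R * nat) :=
  [seq ((nth 0 L k, (if (k.+1 < size L)%N then Some (nth 0 L k.+1) else None), j),
        k.+1) | k <- iota 0 (size L)].

Definition lifted_weighted (R : realDomainType) (P : nat -> seq R)
  (col : nat -> R -> nat) (t phi : nat) : seq (pt3 R * nat) :=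
  flatten [seq flatten [seq lift_class (color_class (P j) (col j) c) j
                       | c <- iota 1 phi] | j <- iota 1 t].

Definition tildeP (R : realDomainType) (P : nat -> seq R)
  (col : nat -> R -> nat) (t phi : nat) : seq (pt3 R) :=
  undup [seq pw.1 | pw <- lifted_weighted P col t phi].

Definition in_Q (R : realDomainType) (x y : R) (i : nat) (p : pt3 R) : bool :=
  [&& p.1.1 <= x, (if p.1.2 is Some b then y <= b else true) & (p.2 <= i)%N].

Definition shallow (T : Type) (k : nat) (Q : pred T) (S : seq T) : bool :=
  (count Q S <= k)%N.

(* For a fixed slab j and color c, two points (x_k, x_(k+1), j) and (x_k', x_(k'+1), j) with
   k < k' cannot both lie in Q: that would give y <= x_(k+1) <= x_k' <= x < y.  So every
   color class of every slab j <= i contributes at most one point, the slabs j > i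
   contribute nothing, and Q meets at most i * phi points. *)

From mathcomp Require Import all_boot all_order all_algebra.
Import Order.TTheory GRing.Theory Num.Theory.
Local Open Scope ring_scope.

Lemma count_le1_in (T : eqType) (a : pred T) (s : seq T) : uniq s ->
  {in s &, forall u v, a u -> a v -> u = v} -> (count a s <= 1)%N.
Proof.
move=> s_uniq a_inj; rewrite -size_filter.
case Es: (filter a s) => [|u [|v r]] //.
have: uniq (u :: v :: r) by rewrite -Es filter_uniq.
have: u \in filter a s by rewrite Es mem_head.
have: v \in filter a s by rewrite Es !inE eqxx orbT.
rewrite !mem_filter => /andP[av sv] /andP[au su].
by rewrite /= inE (a_inj u v su sv au av) eqxx.
Qed.

Lemma sumn_map_le_count (T : Type) (f : T -> nat) (a : pred T) (b : nat)
    (s : seq T) :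
  (forall z, f z <= b * a z)%N -> (sumn (map f s) <= b * count a s)%N.
Proof.
move=> f_le; elim: s => //= z s IHs.
by rewrite mulnDr leq_add.
Qed.

Lemma count_iota1_le (i t : nat) : (count (fun j => j <= i) (iota 1 t) <= i)%N.
Proof.
rewrite -size_filter -[X in (_ <= X)%N](size_iota 1).
apply: uniq_leq_size; first by rewrite filter_uniq ?iota_uniq.
move=> j; rewrite mem_filter !mem_iota => /andP[le_ji /andP[j_ge1 _]].
by rewrite j_ge1 add1n ltnS.
Qed.

Section ShallowRange.

Variables (R : realFieldType) (x y : R) (i : nat).
Hypothesis ltxy : x < y.

Lemma in_Q_lifted_excl (L : seq R) (j : nat) {k k' : nat} :
  sorted <=%R L -> (k < k')%N -> (k' < size L)%N ->
  ~~ [&& in_Q x y i (nth 0 L k, Some (nth 0 L k.+1), j)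
       & in_Q x y i (nth 0 L k',
                     (if (k'.+1 < size L)%N then Some (nth 0 L k'.+1) else None), j)].
Proof.
move=> L_sorted ltkk' lt_k'L; rewrite /in_Q /=; apply/negP.
move=> /andP[/and3P[_ le_y_next _] /and3P[le_k'_x _ _]].
have le_next_k' : nth 0 L k.+1 <= nth 0 L k'.
  by apply: le_sorted_leq_nth; rewrite ?inE //; apply: leq_ltn_trans lt_k'L.
by have := le_trans le_y_next (le_trans le_next_k' le_k'_x); rewrite leNgt ltxy.
Qed.

Lemma count_in_Q_lift_class (L : seq R) (j : nat) : sorted <=%R L ->
  (count (fun pw : pt3 R * nat => in_Q x y i pw.1) (lift_class L j) <= (j <= i))%N.
Proof.
move=> L_sorted; rewrite /lift_class count_map.
have [le_ji | lt_ij] := leqP j i; last first.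
  rewrite (@eq_count _ _ pred0) ?count_pred0 // => k.
  by rewrite /= /in_Q /= (ltn_geF lt_ij) !andbF.
apply: count_le1_in; first exact: iota_uniq.
move=> k k'; rewrite !mem_iota !add0n /= => lt_kL lt_k'L Qk Qk'.
have [lt_kk'|lt_k'k|] := ltngtP k k' => //.
- have := in_Q_lifted_excl L j L_sorted lt_kk' lt_k'L.
  by rewrite (leq_ltn_trans lt_kk' lt_k'L) in Qk *; rewrite Qk Qk'.
- have := in_Q_lifted_excl L j L_sorted lt_k'k lt_kL.
  by rewrite (leq_ltn_trans lt_k'k lt_kL) in Qk' *; rewrite Qk Qk'.
Qed.

End ShallowRange.

Theorem lemma10 (R : realFieldType) (t phi : nat) (P : nat -> seq R)
  (col : nat -> R -> nat)
  (HPuniq : forall j, uniq (P j))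
  (Hcol : forall j p, (1 <= j <= t)%N -> p \in P j -> (1 <= col j p <= phi)%N)
  (i : nat) (x y : R) :
  (1 <= i <= t)%N -> x < y ->
  shallow (i * phi) (in_Q x y i) (tildeP P col t phi).
Proof.
move=> _ ltxy; rewrite /shallow /tildeP mulnC.
apply: leq_trans (count_undup _ _) _.
rewrite count_map /lifted_weighted count_flatten -map_comp.
apply: leq_trans _ (leq_mul (leqnn phi) (count_iota1_le i t)).
apply: sumn_map_le_count => j /=.
rewrite count_flatten -map_comp.
rewrite -[phi in (_ <= phi * _)%N](size_iota 1) -count_predT mulnC.
apply: sumn_map_le_count => c /=; rewrite muln1.
exact/count_in_Q_lift_class/sort_sorted/le_total.
Qed.
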